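(* For every set of formulas $\Gamma$ and every formula $\alpha$: if $\Gamma \vDash_{\bf Km} \alpha$ then $\Gamma \vdash_{\bf Km} \alpha$.
   Context: Formulas are built from a denumerable set of propositional variables $p_1,p_2,\ldots$ by the unary connectives $\neg$, $\Box$ and the binary connective $\to$; $For$ is the set of all formulas. Abbreviations: $\Diamond\alpha:=\neg\Box\neg\alpha$, $\alpha\vee\beta:=\neg\alpha\to\beta$, $\alpha\wedge\beta:=\neg(\alpha\to\neg\beta)$. Hilbert calculus ${\bf Km}$: axioms are all instances (over $For$) of the axiom schemas of a standard Hilbert calculus for classical propositional logic in the signature $\{\neg,\to\}$, together with all instances of: (K') $\Diamond\alpha\to(\Box(\alpha\to\beta)\to(\Box\alpha\to\Box\beta))$; (K1') $\Diamond\neg\beta\to(\Box(\alpha\to\beta)\to(\Diamond\alpha\to\Diamond\beta))$; (K2') $\Diamond\alpha\to(\Diamond(\alpha\to\beta)\to(\Box\alpha\to\Diamond\beta))$; (M3') $(\Diamond\alpha\vee\Diamond\neg\alpha)\to(\Diamond\beta\to\Diamond(\alpha\to\beta))$; (M4') $\Diamond\neg\beta\to(\Diamond\neg\alpha\to\Diamond(\alpha\to\beta))$; (I1) $(\Box\alpha\wedge\Box\neg\alpha)\to(\Box(\alpha\to\beta)\wedge\Box\neg(\alpha\to\beta))$; (I2) $(\Box\beta\wedge\Box\neg\beta)\to(\Box(\alpha\to\beta)\wedge\Box\neg(\alpha\to\beta))$; (M1) $\neg\Diamond\alpha\to\Box(\alpha\to\beta)$; (M2) $\Box\beta\to\Box(\alpha\to\beta)$;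 (DN1) $\Box\alpha\to\Box\neg\neg\alpha$; (DN2) $\Box\neg\neg\alpha\to\Box\alpha$. Modus ponens is the only inference rule; $\Gamma\vdash_{\bf Km}\alpha$ means there is a derivation of $\alpha$ from $\Gamma$. Nmatrix semantics: an Nmatrix has a domain $A$, a set $D\subseteq A$ of designated values and, for each connective, a multioperation assigning to each tuple of arguments a nonempty subset of $A$. A valuation is a map $v:For\to A$ with $v(\neg\alpha)\in\tilde\neg(v(\alpha))$, $v(\Box\alpha)\in\tilde\Box(v(\alpha))$, $v(\alpha\to\beta)\in v(\alpha)\tilde\to v(\beta)$. $\Gamma\vDash\alpha$ iff every valuation $v$ with $v(\gamma)\in D$ for all $\gamma\in\Gamma$ has $v(\alpha)\in D$. The Nmatrix for ${\bf Km}$ (consequence $\vDash_{\bf Km}$): domain $\{T^+,C^+,F^+,I^+,T^-,C^-,F^-,I^-\}$, designated set $+=\{T^+,C^+,F^+,I^+\}$, and $-=\{T^-,C^-,F^-,I^-\}$. Negation: $\tilde\neg T^+=\{F^-\}$, $\tilde\neg C^+=\{C^-\}$, $\tilde\neg F^+=\{T^-\}$, $\tilde\neg I^+=\{I^-\}$, $\tilde\neg T^-=\{F^+\}$, $\tilde\neg C^-=\{C^+\}$, $\tilde\neg F^-=\{T^+\}$, $\tilde\neg I^-=\{I^+\}$. Necessity: $\tilde\Box x=+$ if $x\in\{T^+,T^-,I^+,I^-\}$, and $\tilde\Box x=-$ otherwise. Implication (row $x$, column $y$ gives $x\tilde\to y$): $$\begin{array}{c|cccccccc} \to & T^+ & C^+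 & F^+ & I^+ & T^- & C^- & F^- & I^-\\\hline T^+ & \{T^+\}&\{C^+\}&\{F^+\}&\{I^+\}&\{T^-\}&\{C^-\}&\{F^-\}&\{I^-\}\\ C^+ & \{T^+\}&\{T^+,C^+\}&\{C^+\}&\{I^+\}&\{T^-\}&\{T^-,C^-\}&\{C^-\}&\{I^-\}\\ F^+ & \{T^+\}&\{T^+\}&\{T^+\}&\{I^+\}&\{T^-\}&\{T^-\}&\{T^-\}&\{I^-\}\\ I^+ & \{I^+\}&\{I^+\}&\{I^+\}&\{I^+\}&\{I^-\}&\{I^-\}&\{I^-\}&\{I^-\}\\ T^- & \{T^+\}&\{C^+\}&\{F^+\}&\{I^+\}&\{T^+\}&\{C^+\}&\{F^+\}&\{I^+\}\\ C^- & \{T^+\}&\{T^+,C^+\}&\{C^+\}&\{I^+\}&\{T^+\}&\{T^+,C^+\}&\{C^+\}&\{I^+\}\\ F^- & \{T^+\}&\{T^+\}&\{T^+\}&\{I^+\}&\{T^+\}&\{T^+\}&\{T^+\}&\{I^+\}\\ I^- & \{I^+\}&\{I^+\}&\{I^+\}&\{I^+\}&\{I^+\}&\{I^+\}&\{I^+\}&\{I^+\}\end{array}$$ *)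

From Stdlib Require Import List.
Import ListNotations.

Inductive Formula : Type :=
| Var : nat -> Formula
| Neg : Formula -> Formula
| Box : Formula -> Formula
| Imp : Formula -> Formula -> Formula.

Definition Dia (a : Formula) : Formula := Neg (Box (Neg a)).
Definition Or (a b : Formula) : Formula := Imp (Neg a) b.
Definition And (a b : Formula) : Formula := Neg (Imp a (Neg b)).

(* Classical propositional part: the standard (Lukasiewicz/Mendelson-style)
   axiom schemas for the signature {Neg, Imp}. *)
Inductive KmAxiom : Formula -> Prop :=
| ax_A1 : forall a b, KmAxiom (Imp a (Imp b a))
| ax_A2 : forall a b c,
    KmAxiom (Imp (Imp a (Imp b c)) (Imp (Imp a b) (Imp a c)))
| ax_A3 : forall a b,
    KmAxiom (Imp (Imp (Neg a) (Neg b)) (Imp b a))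
| ax_K' : forall a b,
    KmAxiom (Imp (Dia a) (Imp (Box (Imp a b)) (Imp (Box a) (Box b))))
| ax_K1' : forall a b,
    KmAxiom (Imp (Dia (Neg b)) (Imp (Box (Imp a b)) (Imp (Dia a) (Dia b))))
| ax_K2' : forall a b,
    KmAxiom (Imp (Dia a) (Imp (Dia (Imp a b)) (Imp (Box a) (Dia b))))
| ax_M3' : forall a b,
    KmAxiom (Imp (Or (Dia a) (Dia (Neg a))) (Imp (Dia b) (Dia (Imp a b))))
| ax_M4' : forall a b,
    KmAxiom (Imp (Dia (Neg b)) (Imp (Dia (Neg a)) (Dia (Imp a b))))
| ax_I1 : forall a b,
    KmAxiom (Imp (And (Box a) (Box (Neg a)))
                 (And (Box (Imp a b)) (Box (Neg (Imp a b)))))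
| ax_I2 : forall a b,
    KmAxiom (Imp (And (Box b) (Box (Neg b)))
                 (And (Box (Imp a b)) (Box (Neg (Imp a b)))))
| ax_M1 : forall a b, KmAxiom (Imp (Neg (Dia a)) (Box (Imp a b)))
| ax_M2 : forall a b, KmAxiom (Imp (Box b) (Box (Imp a b)))
| ax_DN1 : forall a, KmAxiom (Imp (Box a) (Box (Neg (Neg a))))
| ax_DN2 : forall a, KmAxiom (Imp (Box (Neg (Neg a))) (Box a)).

Inductive KmDerivable (Gamma : Formula -> Prop) : Formula -> Prop :=
| der_hyp : forall a, Gamma a -> KmDerivable Gamma a
| der_ax : forall a, KmAxiom a -> KmDerivable Gamma a
| der_mp : forall a b,
    KmDerivable Gamma a -> KmDerivable Gamma (Imp a b) -> KmDerivable Gamma b.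

Inductive V8 : Type := Tp | Cp | Fp | Ip | Tm | Cm | Fm | Im.
(* Tp = T^+, Cp = C^+, ..., Tm = T^-, ..., Im = I^- *)

Definition designated (x : V8) : Prop :=
  match x with Tp | Cp | Fp | Ip => True | _ => False end.

Definition neg_nm (x : V8) : list V8 :=
  match x with
  | Tp => [Fm] | Cp => [Cm] | Fp => [Tm] | Ip => [Im]
  | Tm => [Fp] | Cm => [Cp] | Fm => [Tp] | Im => [Ip]
  end.

Definition plus_set : list V8 := [Tp; Cp; Fp; Ip].
Definition minus_set : list V8 := [Tm; Cm; Fm; Im].

Definition box_nm (x : V8) : list V8 :=
  match x with
  | Tp | Tm | Ip | Im => plus_set
  | _ => minus_set
  end.

Definition imp_nm (x y : V8) : list V8 :=
  match x with
  | Tp => match y with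
          | Tp => [Tp] | Cp => [Cp] | Fp => [Fp] | Ip => [Ip]
          | Tm => [Tm] | Cm => [Cm] | Fm => [Fm] | Im => [Im] end
  | Cp => match y with
          | Tp => [Tp] | Cp => [Tp; Cp] | Fp => [Cp] | Ip => [Ip]
          | Tm => [Tm] | Cm => [Tm; Cm] | Fm => [Cm] | Im => [Im] end
  | Fp => match y with
          | Tp => [Tp] | Cp => [Tp] | Fp => [Tp] | Ip => [Ip]
          | Tm => [Tm] | Cm => [Tm] | Fm => [Tm] | Im => [Im] end
  | Ip => match y with
          | Tp => [Ip] | Cp => [Ip] | Fp => [Ip] | Ip => [Ip]
          | Tm => [Im] | Cm => [Im] | Fm => [Im] | Im => [Im] end
  | Tm => match y with
          | Tp => [Tp] | Cp => [Cp] | Fp => [Fp] | Ip => [Ip]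
          | Tm => [Tp] | Cm => [Cp] | Fm => [Fp] | Im => [Ip] end
  | Cm => match y with
          | Tp => [Tp] | Cp => [Tp; Cp] | Fp => [Cp] | Ip => [Ip]
          | Tm => [Tp] | Cm => [Tp; Cp] | Fm => [Cp] | Im => [Ip] end
  | Fm => match y with
          | Tp => [Tp] | Cp => [Tp] | Fp => [Tp] | Ip => [Ip]
          | Tm => [Tp] | Cm => [Tp] | Fm => [Tp] | Im => [Ip] end
  | Im => match y with
          | Tp => [Ip] | Cp => [Ip] | Fp => [Ip] | Ip => [Ip]
          | Tm => [Ip] | Cm => [Ip] | Fm => [Ip] | Im => [Ip] end
  end.

Definition KmValuation (v : Formula -> V8) : Prop :=
  (forall a, In (v (Neg a)) (neg_nm (v a))) /\
  (forall a, In (v (Box a)) (box_nm (v a))) /\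
  (forall a b, In (v (Imp a b)) (imp_nm (v a) (v b))).

Definition KmEntails (Gamma : Formula -> Prop) (a : Formula) : Prop :=
  forall v : Formula -> V8, KmValuation v ->
    (forall g, Gamma g -> designated (v g)) -> designated (v a).

(* Canonical-model argument.  If Gamma does not derive alpha, a Lindenbaum
   construction extends Gamma to a set Delta that still does not derive alpha
   and is maximal with this property; Delta behaves classically on Neg and Imp.
   Each formula f is then valued by three bits: whether f, Box f and
   Box (Neg f) belong to Delta.  The first bit is the sign (+/-) of the value,
   the other two select its letter, and the modal axioms of Km are exactly the
   constraints on these bits that make the valuation respect the Nmatrix.
   This valuation designates Gamma but not alpha. *)

From Stdlib Require Import List Classical ClassicalEpsilon Lia.
From Stdlib Require Cantor.

Definition extend (G : Formula -> Prop) (b : Formula) : Formula -> Prop :=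
  fun x => G x \/ x = b.

Lemma derivable_mono G G' a :
  (forall x, G x -> G' x) -> KmDerivable G a -> KmDerivable G' a.
Proof.
  intros HGG' D; induction D.
  - apply der_hyp; auto.
  - apply der_ax; auto.
  - eapply der_mp; [exact IHD1 | exact IHD2].
Qed.

Lemma derivable_extend_hyp G b : KmDerivable (extend G b) b.
Proof. apply der_hyp; right; reflexivity. Qed.

Lemma derivable_extend G b c : KmDerivable G c -> KmDerivable (extend G b) c.
Proof. apply derivable_mono; intros; left; assumption. Qed.

Lemma mp G a b : KmDerivable G (Imp a b) -> KmDerivable G a -> KmDerivable G b.
Proof. intros; eapply der_mp; eauto. Qed.

Lemma derivable_A1 G a b : KmDerivable G (Imp a (Imp b a)).
Proof. apply der_ax, ax_A1. Qed.

Lemma derivable_A3 G a b : KmDerivable G (Imp (Imp (Neg a) (Neg b)) (Imp b a)).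
Proof. apply der_ax, ax_A3. Qed.

Lemma derivable_imp_refl G a : KmDerivable G (Imp a a).
Proof.
  eapply mp; [eapply mp; [apply der_ax, (ax_A2 a (Imp a a) a) |] |].
  - apply derivable_A1.
  - apply derivable_A1.
Qed.

Lemma deduction G b c : KmDerivable (extend G b) c -> KmDerivable G (Imp b c).
Proof.
  intro D; induction D as [a [Ha | ->] | a Ha | a c _ IHa _ IHac].
  - eapply mp; [apply derivable_A1 | apply der_hyp, Ha].
  - apply derivable_imp_refl.
  - eapply mp; [apply derivable_A1 | apply der_ax, Ha].
  - eapply mp; [eapply mp; [apply der_ax, ax_A2 | exact IHac] | exact IHa].
Qed.

Lemma neg_explosion G a b : KmDerivable G (Imp (Neg a) (Imp a b)).
Proof.
  apply deduction. eapply mp; [apply derivable_A3 |].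
  eapply mp; [apply derivable_A1 | apply derivable_extend_hyp].
Qed.

Lemma dneg_elim G b : KmDerivable G (Imp (Neg (Neg b)) b).
Proof.
  apply deduction. set (G' := extend G (Neg (Neg b))).
  assert (H4 : KmDerivable G' (Imp (Neg (Neg (Neg (Neg b)))) (Neg (Neg b)))).
  { eapply mp; [apply derivable_A1 | apply derivable_extend_hyp]. }
  assert (H3 : KmDerivable G' (Imp (Neg b) (Neg (Neg (Neg b))))).
  { eapply mp; [apply derivable_A3 | exact H4]. }
  eapply mp; [eapply mp; [apply derivable_A3 | exact H3] | apply derivable_extend_hyp].
Qed.

Lemma dneg_intro G b : KmDerivable G (Imp b (Neg (Neg b))).
Proof. eapply mp; [apply derivable_A3 | apply dneg_elim]. Qed.

Lemma contraposition G a b : KmDerivable G (Imp (Imp a b) (Imp (Neg b) (Neg a))).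
Proof.
  apply deduction. eapply mp; [apply derivable_A3 |]. apply deduction.
  eapply mp; [apply dneg_intro |].
  eapply mp; [apply derivable_extend, derivable_extend_hyp |].
  eapply mp; [apply dneg_elim | apply derivable_extend_hyp].
Qed.

Lemma derivable_by_cases G a b :
  KmDerivable G (Imp a b) -> KmDerivable G (Imp (Neg a) b) -> KmDerivable G b.
Proof.
  intros Hpos Hneg.
  assert (Cpos : KmDerivable G (Imp (Neg b) (Neg a)))
    by (eapply mp; [apply contraposition | exact Hpos]).
  assert (Cneg : KmDerivable G (Imp (Neg b) (Neg (Neg a))))
    by (eapply mp; [apply contraposition | exact Hneg]).
  assert (Absurd : KmDerivable G (Imp (Neg b) (Neg (Imp b b)))).
  { apply deduction.
    eapply mp; [eapply mp; [apply neg_explosion |] |].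
    - eapply mp; [apply derivable_extend, Cneg | apply derivable_extend_hyp].
    - eapply mp; [apply derivable_extend, Cpos | apply derivable_extend_hyp]. }
  eapply mp; [eapply mp; [apply derivable_A3 | exact Absurd] | apply derivable_imp_refl].
Qed.

Definition pair_code (a b : nat) : nat := Cantor.to_nat (a, b).

Lemma pair_code_inj a b c d : pair_code a b = pair_code c d -> a = c /\ b = d.
Proof.
  unfold pair_code; intro H.
  assert (E : (a, b) = (c, d)).
  { rewrite <- (Cantor.cancel_of_to (a, b)), <- (Cantor.cancel_of_to (c, d)), H.
    reflexivity. }
  now inversion E.
Qed.

Fixpoint formula_code (f : Formula) : nat :=
  match f with
  | Var n => pair_code 0 n
  | Neg a => pair_code 1 (formula_code a)
  | Box a => pair_code 2 (formula_code a)
  | Imp a b => pair_code 3 (pair_code (formula_code a) (formula_code b))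
  end.

Lemma formula_code_inj f g : formula_code f = formula_code g -> f = g.
Proof.
  revert g; induction f; destruct g; cbn [formula_code]; intro H;
    apply pair_code_inj in H; destruct H as [Hc H]; try discriminate; subst.
  - reflexivity.
  - f_equal; auto.
  - f_equal; auto.
  - apply pair_code_inj in H as [Ha Hb]. f_equal; auto.
Qed.

Section Lindenbaum.

Variables (Gamma : Formula -> Prop) (alpha : Formula).

(* Stage n+1 decides the formula with code n. *)
Fixpoint lindenbaum_chain (n : nat) : Formula -> Prop :=
  match n with
  | 0 => Gamma
  | S n => fun x => lindenbaum_chain n x \/
      (formula_code x = n /\ ~ KmDerivable (extend (lindenbaum_chain n) x) alpha)
  end.

Definition lindenbaum_limit (x : Formula) : Prop := exists n, lindenbaum_chain n x.

Lemma lindenbaum_chain_mono n m x :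
  n <= m -> lindenbaum_chain n x -> lindenbaum_chain m x.
Proof. induction 1; simpl; auto. Qed.

Lemma lindenbaum_chain_not_derivable :
  ~ KmDerivable Gamma alpha -> forall n, ~ KmDerivable (lindenbaum_chain n) alpha.
Proof.
  intros H0 n; induction n as [| n IHn]; simpl; auto.
  destruct (classic (exists y, formula_code y = n /\
                               ~ KmDerivable (extend (lindenbaum_chain n) y) alpha))
    as [[y [Ey Ny]] | Nothing].
  - intro D; apply Ny; revert D; apply derivable_mono.
    intros x [Hx | [Ex _]]; [left; exact Hx | right].
    apply formula_code_inj; congruence.
  - intro D; apply IHn; revert D; apply derivable_mono.
    intros x [Hx | [Ex Nx]]; [exact Hx |].
    exfalso; apply Nothing; eauto.
Qed.

Lemma lindenbaum_limit_derivable a :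
  KmDerivable lindenbaum_limit a -> exists n, KmDerivable (lindenbaum_chain n) a.
Proof.
  induction 1 as [a [n Hn] | a Ha | a b _ [n1 D1] _ [n2 D2]].
  - exists n; apply der_hyp, Hn.
  - exists 0; apply der_ax, Ha.
  - exists (max n1 n2). apply (der_mp _ a b).
    + revert D1; apply derivable_mono; intros x; apply lindenbaum_chain_mono; lia.
    + revert D2; apply derivable_mono; intros x; apply lindenbaum_chain_mono; lia.
Qed.

Lemma lindenbaum :
  ~ KmDerivable Gamma alpha ->
  exists Delta : Formula -> Prop,
    (forall g, Gamma g -> Delta g) /\
    ~ KmDerivable Delta alpha /\
    (forall b, ~ KmDerivable (extend Delta b) alpha -> Delta b).
Proof.
  intro N. exists lindenbaum_limit. split; [| split].
  - intros g Hg. exists 0. exact Hg.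
  - intro D. destruct (lindenbaum_limit_derivable alpha D) as [n Dn].
    exact (lindenbaum_chain_not_derivable N n Dn).
  - intros b Nb. exists (S (formula_code b)). right. split; [reflexivity |].
    intro D; apply Nb; revert D; apply derivable_mono.
    intros x [Hx | Hx]; [left; exists (formula_code b); exact Hx | right; exact Hx].
Qed.

End Lindenbaum.

(* T = Box f only, C = neither, F = Box (Neg f) only, I = both. *)
Definition v8_of (sign boxed boxed_neg : bool) : V8 :=
  match sign, boxed, boxed_neg with
  | true, true, false => Tp | true, false, false => Cp
  | true, false, true => Fp | true, true, true => Ip
  | false, true, false => Tm | false, false, false => Cm
  | false, false, true => Fm | false, true, true => Im
  end.

Lemma designated_v8_of s b n : designated (v8_of s b n) <-> s = true.
Proof. destruct s, b, n; simpl; intuition discriminate. Qed.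

Lemma neg_nm_v8_of s b n : In (v8_of (negb s) n b) (neg_nm (v8_of s b n)).
Proof. destruct s, b, n; simpl; tauto. Qed.

Lemma box_nm_v8_of s b n b' n' : In (v8_of b b' n') (box_nm (v8_of s b n)).
Proof. destruct s, b, n, b', n'; simpl; tauto. Qed.

(* The hypotheses are (I1), (I2), (M1), (M2), (K'), (K1'), (K2'), (M3'), (M4')
   read in a maximal set: [ba], [na], [bI], [nI] say that Box a, Box (Neg a),
   Box (Imp a b), Box (Neg (Imp a b)) are members, and a Diamond is a member
   iff the corresponding Box-Neg is not. *)
Lemma imp_nm_v8_of sa sb ba na bb nb bI nI :
  implb (ba && na) (bI && nI) = true ->
  implb (bb && nb) (bI && nI) = true ->
  implb na bI = true ->
  implb bb bI = true ->
  implb (negb na) (implb bI (implb ba bb)) = true ->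
  implb (negb bb) (implb bI (implb (negb na) (negb nb))) = true ->
  implb (negb na) (implb (negb nI) (implb ba (negb nb))) = true ->
  implb (negb na || negb ba) (implb (negb nb) (negb nI)) = true ->
  implb (negb bb) (implb (negb ba) (negb nI)) = true ->
  In (v8_of (implb sa sb) bI nI) (imp_nm (v8_of sa ba na) (v8_of sb bb nb)).
Proof. destruct sa, sb, ba, na, bb, nb, bI, nI; simpl; intros; try discriminate; tauto. Qed.

Section CanonicalValuation.

Variables (Delta : Formula -> Prop) (alpha : Formula).
Hypothesis Delta_not_derivable : ~ KmDerivable Delta alpha.
Hypothesis Delta_maximal : forall b, ~ KmDerivable (extend Delta b) alpha -> Delta b.

Lemma Delta_closed b : KmDerivable Delta b -> Delta b.
Proof.
  intro Db. apply Delta_maximal. intro E. apply Delta_not_derivable.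
  exact (mp _ _ _ (deduction _ _ _ E) Db).
Qed.

Lemma Delta_neg b : Delta (Neg b) <-> ~ Delta b.
Proof.
  split.
  - intros Hnb Hb. apply Delta_not_derivable.
    eapply mp; [eapply mp; [apply neg_explosion | apply der_hyp, Hnb] | apply der_hyp, Hb].
  - intro Nb. apply Delta_maximal. intro E. apply Delta_not_derivable.
    assert (Eb : KmDerivable (extend Delta b) alpha).
    { apply NNPP. intro N. exact (Nb (Delta_maximal b N)). }
    eapply derivable_by_cases; apply deduction; eassumption.
Qed.

Lemma Delta_imp a b : Delta (Imp a b) <-> (Delta a -> Delta b).
Proof.
  split.
  - intros Hab Ha. apply Delta_closed. eapply mp; apply der_hyp; eassumption.
  - intro H. apply Delta_closed. destruct (classic (Delta a)) as [Ha | Na].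
    + eapply mp; [apply derivable_A1 | apply der_hyp; auto].
    + apply Delta_neg in Na.
      eapply mp; [apply neg_explosion | apply der_hyp, Na].
Qed.

Definition memb (f : Formula) : bool :=
  if excluded_middle_informative (Delta f) then true else false.

Lemma memb_true f : memb f = true <-> Delta f.
Proof.
  unfold memb; destruct (excluded_middle_informative (Delta f)); intuition discriminate.
Qed.

Lemma memb_neg a : memb (Neg a) = negb (memb a).
Proof.
  apply Bool.eq_true_iff_eq. rewrite Bool.negb_true_iff, memb_true, Delta_neg.
  rewrite <- memb_true. destruct (memb a); intuition discriminate.
Qed.

Lemma memb_imp a b : memb (Imp a b) = implb (memb a) (memb b).
Proof.
  apply Bool.eq_true_iff_eq. rewrite memb_true, Delta_imp, <- !memb_true.
  destruct (memb a), (memb b); simpl; intuition discriminate.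
Qed.

Lemma memb_axiom f : KmAxiom f -> memb f = true.
Proof. intro Hf. apply memb_true, Delta_closed, der_ax, Hf. Qed.

Lemma memb_box_dneg a : memb (Box (Neg (Neg a))) = memb (Box a).
Proof.
  pose proof (memb_axiom _ (ax_DN1 a)) as DN1.
  pose proof (memb_axiom _ (ax_DN2 a)) as DN2.
  rewrite memb_imp in DN1, DN2.
  destruct (memb (Box (Neg (Neg a)))), (memb (Box a)); auto.
Qed.

Definition canonical_val (f : Formula) : V8 :=
  v8_of (memb f) (memb (Box f)) (memb (Box (Neg f))).

Lemma designated_canonical_val f : designated (canonical_val f) <-> Delta f.
Proof. unfold canonical_val. rewrite designated_v8_of. apply memb_true. Qed.

Lemma canonical_val_imp a b :
  In (canonical_val (Imp a b)) (imp_nm (canonical_val a) (canonical_val b)).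
Proof.
  unfold canonical_val. rewrite memb_imp.
  pose proof (memb_axiom _ (ax_I1 a b)) as I1.
  pose proof (memb_axiom _ (ax_I2 a b)) as I2.
  pose proof (memb_axiom _ (ax_M1 a b)) as M1.
  pose proof (memb_axiom _ (ax_M2 a b)) as M2.
  pose proof (memb_axiom _ (ax_K' a b)) as K'.
  pose proof (memb_axiom _ (ax_K1' a b)) as K1'.
  pose proof (memb_axiom _ (ax_K2' a b)) as K2'.
  pose proof (memb_axiom _ (ax_M3' a b)) as M3'.
  pose proof (memb_axiom _ (ax_M4' a b)) as M4'.
  revert I1 I2 M1 M2 K' K1' K2' M3' M4'; unfold Dia, Or, And.
  repeat first [rewrite memb_imp | rewrite memb_neg | rewrite memb_box_dneg
                | rewrite Bool.negb_involutive].
  intros I1 I2 M1 M2 K' K1' K2' M3' M4'.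
  apply imp_nm_v8_of; try assumption; [revert I1 | revert I2 | revert M3'];
    repeat match goal with |- context [memb ?f] => destruct (memb f) end;
    easy.
Qed.

Lemma canonical_valuation : KmValuation canonical_val.
Proof.
  split; [| split].
  - intro a. unfold canonical_val. rewrite memb_neg, memb_box_dneg. apply neg_nm_v8_of.
  - intro a. apply box_nm_v8_of.
  - exact canonical_val_imp.
Qed.

End CanonicalValuation.

Theorem mainTheorem2 :
  forall (Gamma : Formula -> Prop) (alpha : Formula),
    KmEntails Gamma alpha -> KmDerivable Gamma alpha.
Proof.
  intros Gamma alpha Hentails. apply NNPP. intro Hnot.
  destruct (lindenbaum Gamma alpha Hnot) as (Delta & HGamma & Hnd & Hmax).
  apply Hnd, der_hyp.
  apply (designated_canonical_val Delta).
  apply Hentails.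
  - exact (canonical_valuation Delta alpha Hnd Hmax).
  - intros g Hg. apply (designated_canonical_val Delta), HGamma, Hg.
Qed.
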